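(* Let $b\in[0,1]$ with $b\neq\frac12$, and define $f_b:[0,1]\to[0,1]$ by $$f_b(x)=\begin{cases} x, & x\in[0,\frac13]\cup[\frac23,1],\\ (1-2b)x^2+2bx, & x\in(\frac13,\frac23).\end{cases}$$ Let $f_b^n$ denote the $n$-fold composition of $f_b$ with itself. Then: 1. The set of fixed points of $f_b$ is $[0,\frac13]\cup[\frac23,1]$. 2. If $0\le b<\frac12$, then for every $x^{(0)}\in(\frac13,\frac23)$ there exist $n\in\mathbb N$ and $p\in[\frac19(1+4b),\frac13]$ such that $f_b^n(x^{(0)})=p$ and $f_b^{n+1}(x^{(0)})=f_b(p)=p$. 3. If $\frac12<b\le1$, then for every $x^{(0)}\in(\frac13,\frac23)$ there exist $n\in\mathbb N$ and $p\in[\frac23,\frac49(1+b)]$ such that $f_b^n(x^{(0)})=p$ and $f_b^{n+1}(x^{(0)})=f_b(p)=p$.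
   Context: This map is the reduction to $[0,1]$ of the quadratic stochastic operator $x'=x^2+2p(x)xy$, $y'=2(1-p(x))xy+y^2$ (with $y=1-x$), where $p(x)=a$ for $x\le\frac13$, $b$ for $\frac13<x<\frac23$, $c$ for $x\ge\frac23$, in the case $a=c=\frac12$. *)

From Stdlib Require Import Reals Lra.
Open Scope R_scope.

(* The map f_b on [0,1]: identity on [0,1/3] and [2/3,1],
   (1-2b)x^2 + 2bx on (1/3,2/3).  Defined on all of R (values outside
   [0,1] are irrelevant: the statement only uses x in [0,1]). *)
Definition f_b (b x : R) : R :=
  if Rle_dec x (1/3) then x
  else if Rle_dec (2/3) x then x
  else (1 - 2*b) * x^2 + 2*b*x.

Fixpoint f_b_iter (b : R) (n : nat) (x : R) : R :=
  match n with
  | O => x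
  | S m => f_b b (f_b_iter b m x)
  end.

(* On (1/3, 2/3) the map is x + (1 - 2b) x (x - 1), and x (1 - x) > 2/9 there, so for
   b < 1/2 every step moves a point of the middle interval down by at least
   (1 - 2b) 2/9 while, the quadratic being increasing there, keeping it above its value
   (1 + 4b)/9 at 1/3.  Hence the orbit leaves the middle interval after finitely many
   steps and stops on a fixed point of [(1 + 4b)/9, 1/3].  The case b > 1/2 is the
   mirror image: f_b (1 - x) = 1 - f_(1-b) x. *)
From Stdlib Require Import Reals Lra.
Open Scope R_scope.

Section Escape.

Variables (g : R -> R) (a c lo d : R).
Hypothesis d_pos : 0 < d.
Hypothesis g_step : forall x, a < x < c -> lo <= g x <= x - d.

Lemma iter_escape_bounded (k : nat) (x : R) :
  a < x < c -> x < a + INR k * d -> exists n, lo <= Nat.iter n g x <= a.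
Proof.
  revert x; induction k as [|k IHk]; intros x Hx Hk.
  { simpl in Hk; lra. }
  rewrite S_INR in Hk.
  destruct (g_step x Hx) as [Hlo Hdown].
  destruct (Rle_dec (g x) a) as [Hout|Hin].
  - exists 1%nat; simpl; lra.
  - destruct (IHk (g x)) as [n Hn]; [lra|lra|].
    exists (S n); rewrite Nat.iter_succ_r; exact Hn.
Qed.

Lemma iter_escape (x : R) : a < x < c -> exists n, lo <= Nat.iter n g x <= a.
Proof.
  intros Hx.
  destruct (INR_archimed d (x - a) d_pos) as [k Hk].
  apply (iter_escape_bounded k); lra.
Qed.

End Escape.

Lemma f_b_low b x : x <= 1/3 -> f_b b x = x.
Proof. intros Hx; unfold f_b; destruct (Rle_dec x (1/3)); [reflexivity|lra]. Qed.

Lemma f_b_high b x : 2/3 <= x -> f_b b x = x.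
Proof.
  intros Hx; unfold f_b.
  destruct (Rle_dec x (1/3)); [reflexivity|].
  destruct (Rle_dec (2/3) x); [reflexivity|lra].
Qed.

Lemma f_b_mid b x : 1/3 < x < 2/3 -> f_b b x = (1 - 2*b) * x^2 + 2*b*x.
Proof.
  intros Hx; unfold f_b.
  destruct (Rle_dec x (1/3)); [lra|].
  destruct (Rle_dec (2/3) x); [lra|reflexivity].
Qed.

Lemma f_b_fixed_iff b x : b <> 1/2 -> (f_b b x = x <-> x <= 1/3 \/ 2/3 <= x).
Proof.
  intros Hb; split.
  - intros Hfix.
    destruct (Rle_dec x (1/3)) as [Hx|Hx]; [now left|].
    destruct (Rle_dec (2/3) x) as [Hx'|Hx']; [now right|].
    rewrite f_b_mid in Hfix by lra.
    assert (Hprod : (1 - 2*b) * (x * (x - 1)) = 0) by lra.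
    apply Rmult_integral in Hprod as [H|H]; [lra|].
    apply Rmult_integral in H; lra.
  - intros [Hx|Hx]; [apply f_b_low|apply f_b_high]; exact Hx.
Qed.

Lemma f_b_mid_step b x : 0 <= b < 1/2 -> 1/3 < x < 2/3 ->
  (1/9) * (1 + 4*b) <= f_b b x <= x - (1 - 2*b) * (2/9).
Proof.
  intros Hb Hx; rewrite f_b_mid by exact Hx.
  assert (Hgap : 0 <= (1 - 2*b) * ((x - 1/3) * (2/3 - x))).
  { apply Rmult_le_pos; [lra|apply Rmult_le_pos; lra]. }
  assert (Hmono : 0 <= (x - 1/3) * ((1 - 2*b) * (x + 1/3) + 2*b)).
  { apply Rmult_le_pos; [lra|nra]. }
  split; nra.
Qed.

Lemma f_b_reflect b x : f_b b (1 - x) = 1 - f_b (1 - b) x.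
Proof.
  unfold f_b.
  destruct (Rle_dec (1 - x) (1/3)), (Rle_dec (2/3) (1 - x)),
    (Rle_dec x (1/3)), (Rle_dec (2/3) x); try lra; ring.
Qed.

Lemma f_b_iter_Nat_iter b n x : f_b_iter b n x = Nat.iter n (f_b b) x.
Proof. induction n as [|n IHn]; simpl; [reflexivity|now rewrite IHn]. Qed.

Lemma f_b_iter_reflect b n x : f_b_iter b n (1 - x) = 1 - f_b_iter (1 - b) n x.
Proof. induction n as [|n IHn]; simpl; [reflexivity|now rewrite IHn, f_b_reflect]. Qed.

Lemma f_b_iter_lands_low b x : 0 <= b < 1/2 -> 1/3 < x < 2/3 ->
  exists n, (1/9) * (1 + 4*b) <= f_b_iter b n x <= 1/3.
Proof.
  intros Hb Hx.
  assert (Hd : 0 < (1 - 2*b) * (2/9)) by lra.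
  destruct (iter_escape _ _ _ _ _ Hd (fun y => f_b_mid_step b y Hb) x Hx) as [n Hn].
  exists n; rewrite f_b_iter_Nat_iter; exact Hn.
Qed.

Theorem theorem2p2 (b : R) (hb0 : 0 <= b) (hb1 : b <= 1) (hb : b <> 1/2) :
  (forall x : R, 0 <= x <= 1 ->
     (f_b b x = x <-> (0 <= x <= 1/3 \/ 2/3 <= x <= 1))) /\
  (b < 1/2 -> forall x0 : R, 1/3 < x0 < 2/3 ->
     exists (n : nat) (p : R), (1/9) * (1 + 4*b) <= p <= 1/3 /\
       f_b_iter b n x0 = p /\ f_b_iter b (S n) x0 = f_b b p /\ f_b b p = p) /\
  (1/2 < b -> forall x0 : R, 1/3 < x0 < 2/3 ->
     exists (n : nat) (p : R), 2/3 <= p <= (4/9) * (1 + b) /\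
       f_b_iter b n x0 = p /\ f_b_iter b (S n) x0 = f_b b p /\ f_b b p = p).
Proof.
  split; [|split].
  - intros x Hx; rewrite (f_b_fixed_iff b x hb); lra.
  - intros Hb x0 Hx0.
    destruct (f_b_iter_lands_low b x0) as [n Hn]; [lra|exact Hx0|].
    exists n, (f_b_iter b n x0).
    simpl; rewrite f_b_low by lra.
    repeat split; lra.
  - intros Hb x0 Hx0.
    destruct (f_b_iter_lands_low (1 - b) (1 - x0)) as [n Hn]; [lra|lra|].
    replace x0 with (1 - (1 - x0)) by ring.
    exists n, (f_b_iter b n (1 - (1 - x0))).
    simpl; rewrite f_b_iter_reflect, f_b_high by lra.
    repeat split; lra.
Qed.
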